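(* Let $\mathcal X,\mathcal Y$ be complex Hilbert spaces and $A:\mathcal X\supset\operatorname{dom}A\to\mathcal Y$ a closed, densely defined linear operator such that $A^*A$ is uniformly positive, i.e. there is $c>0$ with $\|Ax\|_{\mathcal Y}\ge c\|x\|_{\mathcal X}$ for all $x\in\operatorname{dom}A$. Let $\mathcal Y_1:=\operatorname{ran}A$, regarded as a Hilbert space with the inner product of $\mathcal Y$. Let $B:\mathcal Y\supset\operatorname{dom}B\to\mathcal X$ be a closed, densely defined linear operator with $A^*\subset -B$. Define $B_{\mathcal Y_1}:\mathcal Y_1\supset\operatorname{dom}B\cap\mathcal Y_1\to\mathcal X$ by $B_{\mathcal Y_1}y=By$. Then $B_{\mathcal Y_1}$ is a closed and densely defined operator from $\mathcal Y_1$ to $\mathcal X$.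
   Context: Under the stated hypotheses $\operatorname{ran}A$ is a closed subspace of $\mathcal Y$, so $\mathcal Y_1$ is a Hilbert space. $A^*\subset -B$ means $\operatorname{dom}A^*\subset\operatorname{dom}B$ and $By=-A^*y$ for $y\in\operatorname{dom}A^*$. *)

From HB Require Import structures.
From mathcomp Require Import all_boot all_order all_algebra.
From mathcomp Require Import reals.
From mathcomp.real_closed Require Import complex.
Set Implicit Arguments. Unset Strict Implicit. Unset Printing Implicit Defensive.
Import Order.TTheory GRing.Theory Num.Theory.
Local Open Scope ring_scope.

Section Hilbert.
Variable R : realType.

Definition is_inner_product (V : lmodType R[i]) (ip : V -> V -> R[i]) : Prop :=
  [/\ (forall (a : R[i]) (x y z : V), ip (a *: x + y) z = a * ip x z + ip y z),
      (forall x y : V, ip y x = (ip x y)^*),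
      (forall x : V, 0 <= ip x x) &
      (forall x : V, ip x x = 0 -> x = 0)].

Definition hnorm (V : lmodType R[i]) (ip : V -> V -> R[i]) (x : V) : R :=
  Num.sqrt (complex.Re (ip x x)).

Definition hcvg (V : lmodType R[i]) (ip : V -> V -> R[i]) (u : nat -> V) (l : V) : Prop :=
  forall e : R, 0 < e -> exists N : nat, forall n : nat, (N <= n)%N ->
    hnorm ip (u n - l) < e.

Definition hcauchy (V : lmodType R[i]) (ip : V -> V -> R[i]) (u : nat -> V) : Prop :=
  forall e : R, 0 < e -> exists N : nat, forall m n : nat, (N <= m)%N -> (N <= n)%N ->
    hnorm ip (u m - u n) < e.

Definition is_hilbert (V : lmodType R[i]) (ip : V -> V -> R[i]) : Prop :=
  is_inner_product ip /\ (forall u : nat -> V, hcauchy ip u -> exists l, hcvg ip u l).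

Definition is_subspace (V : lmodType R[i]) (D : V -> Prop) : Prop :=
  D 0 /\ (forall (a : R[i]) (x y : V), D x -> D y -> D (a *: x + y)).

(* a (possibly unbounded) linear operator with domain D, acting as T on D *)
Definition is_linear_op (V W : lmodType R[i]) (D : V -> Prop) (T : V -> W) : Prop :=
  is_subspace D /\
  (forall (a : R[i]) (x y : V), D x -> D y -> T (a *: x + y) = a *: T x + T y).

Definition dense_in (V : lmodType R[i]) (ip : V -> V -> R[i]) (S D : V -> Prop) : Prop :=
  forall x : V, S x -> forall e : R, 0 < e ->
    exists y : V, [/\ D y, S y & hnorm ip (x - y) < e].

(* operator (D, T) regarded on the subspace S (inner product of V restricted
   to S) has closed graph: sequences in D /\ S converging in S whose images
   converge *)
Definition closed_op_in (V W : lmodType R[i]) (ipV : V -> V -> R[i]) (ipW : W -> W -> R[i])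
  (S D : V -> Prop) (T : V -> W) : Prop :=
  forall (u : nat -> V) (x : V) (y : W),
    (forall n, D (u n) /\ S (u n)) -> S x ->
    hcvg ipV u x -> hcvg ipW (fun n => T (u n)) y -> D x /\ T x = y.

Definition densely_defined (V : lmodType R[i]) (ip : V -> V -> R[i]) (D : V -> Prop) :=
  dense_in ip (fun _ => True) D.

Definition closed_op (V W : lmodType R[i]) (ipV : V -> V -> R[i]) (ipW : W -> W -> R[i])
  (D : V -> Prop) (T : V -> W) : Prop :=
  closed_op_in ipV ipW (fun _ => True) D T.

(* graph of the adjoint of (D, T) : y \in dom T^* and T^* y = z *)
Definition adjoint_graph (V W : lmodType R[i]) (ipV : V -> V -> R[i]) (ipW : W -> W -> R[i])
  (D : V -> Prop) (T : V -> W) (y : W) (z : V) : Prop :=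
  forall x : V, D x -> ipW (T x) y = ipV x z.

End Hilbert.

From mathcomp Require Import all_boot all_order all_algebra.
From mathcomp Require Import reals boolp classical_sets.
From mathcomp.real_closed Require Import complex.
From mathcomp Require Import lra ring.
Import Order.TTheory GRing.Theory Num.Theory.
Local Open Scope ring_scope.
Local Open Scope complex_scope.
Set Implicit Arguments. Unset Strict Implicit.

(* Write y0 = A x0 for a point of ran A.  The functional k |-> Re <k, y0> is
   bounded on K := ran A /\ dom B, so a minimizing sequence of
   ||k||^2 - 2 Re <k, y0> on K is Cauchy by the parallelogram law; its limit p
   lies in ran A, which is closed because A is closed and bounded below, and
   Re <k, p> = Re <k, y0> for all k in K.  The same minimization applied to
   y |-> Re <A^-1 y, f> on ran A shows that A^* maps ran A onto X; since
   dom A^* is contained in dom B, some z in K has A^* z = x0 - A^-1 p, whence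
   ||x0 - A^-1 p||^2 = Re <y0 - p, z> = 0.  So y0 = p is a limit of points
   of K.  Closedness of the restriction is inherited from B. *)

Local Notation Re := complex.Re.

Lemma Re_conj (R : rcfType) (z : R[i]) : Re (Num.conj z) = Re z.
Proof. by case: z. Qed.

Lemma Re_realM (R : rcfType) (a : R) (z : R[i]) : Re (a%:C * z) = a * Re z.
Proof. by case: z => x y /=; rewrite !mul0r subr0. Qed.

Lemma Re_iM (R : rcfType) (z : R[i]) : Re ('i * z) = - complex.Im z.
Proof. by rewrite mulrC ReiNIm. Qed.

Lemma complex_eq (R : rcfType) (z w : R[i]) :
  Re z = Re w -> complex.Im z = complex.Im w -> z = w.
Proof. by case: z => ? ?; case: w => ? ? /= -> ->. Qed.

Lemma ge0_complexE (R : rcfType) (z : R[i]) : 0 <= z -> z = (Re z)%:C.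
Proof. by move=> /ger0_Im; case: z => x y /= ->. Qed.

Lemma ge0_Re (R : rcfType) (z : R[i]) : 0 <= z -> 0 <= Re z.
Proof. by case: z => x y; rewrite lecE /= => /andP[]. Qed.

Lemma invS_eventually_lt (R : archiRealFieldType) (e : R) : 0 < e ->
  exists N : nat, forall n, (N <= n)%N -> (n.+1%:R : R)^-1 < e.
Proof.
move=> e0; have e'0 : 0 < e^-1 by rewrite invr_gt0.
exists (Num.Def.archi_bound e^-1) => n Hn.
rewrite -[e]invrK ltf_pV2 ?posrE ?ltr0Sn ?invr_gt0 //.
apply: lt_le_trans (archi_boundP (ltW e'0)) _; rewrite ler_nat; exact: leqW.
Qed.

Lemma ge0_of_quadratic (R : realFieldType) (a N : R) :
  (forall t, 0 < t -> 0 <= 2 * t * a + t ^+ 2 * N) -> 0 <= a.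
Proof.
move=> H; rewrite leNgt; apply/negP => a0.
have N1 : 0 < `|N| + 1 by rewrite ltr_wpDl.
pose t := - a / (`|N| + 1).
have t0 : 0 < t by rewrite divr_gt0 // oppr_gt0.
have tN : t * (t * (`|N| + 1)) = t * - a by rewrite divfK ?gt_eqF.
have := ler_wpM2l (sqr_ge0 t) (ler_norm N).
have ta : 0 < t * - a by rewrite mulr_gt0 ?oppr_gt0.
have := H t t0; nra.
Qed.

Section InnerProduct.
Variables (R : realType) (V : lmodType R[i]) (ip : V -> V -> R[i]).
Hypothesis hip : is_inner_product ip.

Lemma ip0l z : ip 0 z = 0.
Proof.
case: hip => L _ _ _; have := L 1 0 0 z; rewrite scale1r addr0 mul1r => H.
by apply: (addrI (ip 0 z)); rewrite addr0 -H.
Qed.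

Lemma ipDl x y z : ip (x + y) z = ip x z + ip y z.
Proof. by case: hip => L _ _ _; rewrite -[x]scale1r L mul1r scale1r. Qed.

Lemma ipZl a x z : ip (a *: x) z = a * ip x z.
Proof. by case: hip => L _ _ _; rewrite -[a *: x]addr0 L ip0l addr0. Qed.

Lemma ipNl x z : ip (- x) z = - ip x z.
Proof. by rewrite -scaleN1r ipZl mulN1r. Qed.

Lemma ipBl x y z : ip (x - y) z = ip x z - ip y z.
Proof. by rewrite ipDl ipNl. Qed.

Lemma Re_ipC x y : Re (ip y x) = Re (ip x y).
Proof. by case: hip => _ S _ _; rewrite S Re_conj. Qed.

Lemma Re_ipDr x y z : Re (ip z (x + y)) = Re (ip z x) + Re (ip z y).
Proof. by rewrite Re_ipC ipDl raddfD /= !(Re_ipC z). Qed.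

Lemma Re_ipZl (a : R) x y : Re (ip (a%:C *: x) y) = a * Re (ip x y).
Proof. by rewrite ipZl Re_realM. Qed.

Lemma Re_ipZr (a : R) x y : Re (ip x (a%:C *: y)) = a * Re (ip x y).
Proof. by rewrite Re_ipC Re_ipZl Re_ipC. Qed.

Lemma Re_ipNl x y : Re (ip (- x) y) = - Re (ip x y).
Proof. by rewrite ipNl raddfN. Qed.

Lemma Re_ipNr x y : Re (ip x (- y)) = - Re (ip x y).
Proof. by rewrite Re_ipC Re_ipNl Re_ipC. Qed.

Lemma Re_ipBl x y z : Re (ip (x - y) z) = Re (ip x z) - Re (ip y z).
Proof. by rewrite ipBl raddfB. Qed.

Lemma Re_ip_ge0 x : 0 <= Re (ip x x).
Proof. by case: hip => _ _ P _; apply: ge0_Re. Qed.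

Lemma Re_ip_eq0 x : Re (ip x x) = 0 -> x = 0.
Proof. by case: hip => _ _ P D H; apply: D; rewrite (ge0_complexE (P x)) H. Qed.

Lemma Re_ip_selfD x y :
  Re (ip (x + y) (x + y)) = Re (ip x x) + 2 * Re (ip x y) + Re (ip y y).
Proof. by rewrite ipDl raddfD /= !Re_ipDr (Re_ipC y x); ring. Qed.

Lemma Re_ip_selfZ (a : R) x :
  Re (ip (a%:C *: x) (a%:C *: x)) = a ^+ 2 * Re (ip x x).
Proof. by rewrite Re_ipZl Re_ipZr mulrA expr2. Qed.

Lemma cauchy_schwarz x y : Re (ip x y) ^+ 2 <= Re (ip x x) * Re (ip y y).
Proof.
have [/Re_ip_eq0 ->|Hy] := eqVneq (Re (ip y y)) 0.
  by rewrite Re_ipC ip0l /= expr0n /= mulr_ge0 ?Re_ip_ge0 // ip0l.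
have Hy' : 0 < Re (ip y y) by rewrite lt_def Hy Re_ip_ge0.
(* expand 0 <= ||x + t y||^2 at t = - Re <x, y> / ||y||^2 *)
pose t := - Re (ip x y) / Re (ip y y).
have H := Re_ip_ge0 (x + t%:C *: y).
rewrite Re_ip_selfD Re_ipZr Re_ip_selfZ in H.
have Ht : t * Re (ip y y) = - Re (ip x y) by rewrite /t mulrVK // unitfE.
have := mulr_ge0 H (ltW Hy'); nra.
Qed.

Lemma hnorm_ge0 x : 0 <= hnorm ip x.
Proof. exact: sqrtr_ge0. Qed.

Lemma hnorm_sqr x : hnorm ip x ^+ 2 = Re (ip x x).
Proof. by rewrite sqr_sqrtr // Re_ip_ge0. Qed.

Lemma Re_ip_le_hnorm x y : Re (ip x y) <= hnorm ip x * hnorm ip y.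
Proof.
have := cauchy_schwarz x y; rewrite -!hnorm_sqr -exprMn => H.
have := mulr_ge0 (hnorm_ge0 x) (hnorm_ge0 y).
move: H; set s := _ * _; set r := Re _; nra.
Qed.

Lemma hnormD_le x y : hnorm ip (x + y) <= hnorm ip x + hnorm ip y.
Proof.
have H : hnorm ip (x + y) ^+ 2 <= (hnorm ip x + hnorm ip y) ^+ 2.
  by rewrite hnorm_sqr Re_ip_selfD -(hnorm_sqr x) -(hnorm_sqr y);
     have := Re_ip_le_hnorm x y; nra.
have := hnorm_ge0 x; have := hnorm_ge0 y; have := hnorm_ge0 (x + y); nra.
Qed.

Lemma hnormN x : hnorm ip (- x) = hnorm ip x.
Proof. by rewrite /hnorm Re_ipNl Re_ipNr opprK. Qed.

Lemma hnormBC x y : hnorm ip (x - y) = hnorm ip (y - x).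
Proof. by rewrite -hnormN opprB. Qed.

Lemma hnorm0 : hnorm ip 0 = 0.
Proof. by rewrite /hnorm ip0l /= sqrtr0. Qed.

Lemma hnorm_eq0 x : hnorm ip x = 0 -> x = 0.
Proof. by move=> H; apply: Re_ip_eq0; rewrite -hnorm_sqr H expr0n. Qed.

Lemma hcvg_cauchy u l : hcvg ip u l -> hcauchy ip u.
Proof.
move=> H e e0; have [N HN] := H (e / 2) (divr_gt0 e0 (ltr0Sn _ 1)).
exists N => m n Hm Hn.
have -> : u m - u n = (u m - l) + (l - u n) by rewrite addrA subrK.
apply: le_lt_trans (hnormD_le _ _) _; rewrite (hnormBC l).
have := HN m Hm; have := HN n Hn; lra.
Qed.

Lemma ge0_of_hcvg_Re u p k (a s : R) : hcvg ip u p -> 0 <= s ->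
  (forall n, - (n.+1%:R)^-1 < a + s * Re (ip k (u n - p))) -> 0 <= a.
Proof.
move=> hp s0 hlow; apply/ler_addgt0Pr => e e0.
have e2 : 0 < e / 2 by rewrite divr_gt0.
pose h := s * hnorm ip k.
have h0 : 0 <= h by rewrite mulr_ge0 ?hnorm_ge0.
pose d := e / 2 / (h + 1).
have d0 : 0 < d by rewrite divr_gt0 // ltr_wpDl.
have hd : h * d + d = e / 2.
  by rewrite -[d in _ + d]mul1r -mulrDl /d mulrC divfK ?gt_eqF ?ltr_wpDl.
have [N1 HN1] := invS_eventually_lt e2.
have [N2 HN2] := hp d d0.
have [n [Hn1 Hn2]] : exists n, (n.+1%:R)^-1 < e / 2 /\ hnorm ip (u n - p) < d.
  exists (maxn N1 N2).
  by split; [apply: HN1; exact: leq_maxl | apply: HN2; exact: leq_maxr].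
have le1 : s * Re (ip k (u n - p)) <= h * hnorm ip (u n - p).
  by rewrite /h -mulrA ler_wpM2l // Re_ip_le_hnorm.
have le2 : h * hnorm ip (u n - p) <= h * d by rewrite ler_wpM2l // ltW.
have := hlow n; move: (n.+1%:R^-1) Hn1 => i Hn1; lra.
Qed.

End InnerProduct.

Section Subspace.
Variables (R : realType) (V : lmodType R[i]) (D : V -> Prop).
Hypothesis hD : is_subspace D.

Lemma subspace0 : D 0.
Proof. by case: hD. Qed.

Lemma subspaceZD a x y : D x -> D y -> D (a *: x + y).
Proof. by case: hD => _; apply. Qed.

Lemma subspaceZ a x : D x -> D (a *: x).
Proof.
by move=> Dx; rewrite -[_ *: _]addr0; apply: subspaceZD => //; exact: subspace0.
Qed.

Lemma subspaceD x y : D x -> D y -> D (x + y).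
Proof. by move=> Dx Dy; rewrite -[x]scale1r; apply: subspaceZD. Qed.

Lemma subspaceN x : D x -> D (- x).
Proof. by move=> /(subspaceZ (-1)); rewrite scaleN1r. Qed.

Lemma subspaceB x y : D x -> D y -> D (x - y).
Proof. by move=> Dx /subspaceN; apply: subspaceD. Qed.

End Subspace.

Section RealRiesz.
Variables (R : realType) (V : lmodType R[i]) (ip : V -> V -> R[i]).
Hypothesis hH : is_hilbert ip.
Variable K : V -> Prop.
Hypothesis hK : is_subspace K.
Variable psi : V -> R.
Hypothesis psi_linear : forall (a : R) x y, K x -> K y ->
  psi (a%:C *: x + y) = a * psi x + psi y.
Variable M : R.
Hypothesis psi_bounded : forall k, K k -> psi k <= M * hnorm ip k.

Let hip := hH.1.

Let psi0 : psi 0 = 0.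
Proof.
have := psi_linear 1 (subspace0 hK) (subspace0 hK).
rewrite scaler0 addr0 mul1r => H.
by apply: (addrI (psi 0)); rewrite addr0 -H.
Qed.

Let psiZ a x : K x -> psi (a%:C *: x) = a * psi x.
Proof.
by move=> Kx; have := psi_linear a Kx (subspace0 hK); rewrite !addr0 psi0 addr0.
Qed.

Let psiD x y : K x -> K y -> psi (x + y) = psi x + psi y.
Proof. by move=> Kx Ky; have := psi_linear 1 Kx Ky; rewrite mul1r scale1r. Qed.

Let psiN x : K x -> psi (- x) = - psi x.
Proof.
have -> : - x = (-1 : R)%:C *: x by rewrite rmorphN1 scaleN1r.
by move=> Kx; rewrite psiZ // mulN1r.
Qed.

Let energy k := Re (ip k k) - 2 * psi k.

Let m := inf [set energy k | k in K].

Let energy_lbound k : K k -> - M ^+ 2 <= energy k.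
Proof.
move=> Kk; rewrite /energy -hnorm_sqr //.
have := psi_bounded Kk; have := sqr_ge0 (hnorm ip k - M); nra.
Qed.

Let has_inf_energy : has_inf [set energy k | k in K].
Proof.
split; first by exists (energy 0); exists 0 => //; exact: subspace0.
by exists (- M ^+ 2) => _ [k Kk <-]; exact: energy_lbound.
Qed.

Let inf_le_energy k : K k -> m <= energy k.
Proof. by move=> Kk; apply: (ge_inf has_inf_energy.2); exists k. Qed.

Let minimizing u := forall n, K (u n) /\ energy (u n) < m + (n.+1%:R)^-1.

Let exists_minimizing : exists u, minimizing u.
Proof.
suff /choice[u hu] : forall n, exists k, K k /\ energy k < m + (n.+1%:R)^-1.
  by exists u.
move=> n; have eps0 : 0 < (n.+1%:R : R)^-1 by rewrite invr_gt0.
have [_ [k Kk <-] Hk] := inf_adherent eps0 has_inf_energy.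
by exists k.
Qed.

Let energy_midpoint a b : K a -> K b ->
  Re (ip (a - b) (a - b)) =
  2 * energy a + 2 * energy b - 4 * energy ((2^-1 : R)%:C *: (a + b)).
Proof.
move=> Ka Kb; rewrite /energy Re_ip_selfZ // psiZ; last exact: subspaceD.
rewrite psiD // !Re_ip_selfD // !Re_ipNr // !Re_ipNl // opprK.
by field.
Qed.

Let minimizing_cauchy u : minimizing u -> hcauchy ip u.
Proof.
move=> hu e e0.
have [N HN] := invS_eventually_lt (divr_gt0 (exprn_gt0 2 e0) (ltr0Sn _ 3)).
exists N => i j Hi Hj; have [Ki Ei] := hu i; have [Kj Ej] := hu j.
have Kmid : K ((2^-1 : R)%:C *: (u i + u j)).
  by apply: subspaceZ => //; exact: subspaceD.
have d2 : hnorm ip (u i - u j) ^+ 2 < e ^+ 2.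
  rewrite hnorm_sqr // energy_midpoint //.
  have := inf_le_energy Kmid; have := HN i Hi; have := HN j Hj.
  move: Ei Ej; move: (i.+1%:R^-1) (j.+1%:R^-1) => ei ej; lra.
have := hnorm_ge0 ip (u i - u j); nra.
Qed.

Let energy_shift t k u : K k -> K u ->
  energy (t%:C *: k + u) =
  energy u + 2 * t * (Re (ip k u) - psi k) + t ^+ 2 * Re (ip k k).
Proof.
move=> Kk Ku; rewrite /energy psi_linear // (addrC (t%:C *: k)).
by rewrite Re_ip_selfD // Re_ip_selfZ // Re_ipZr // (Re_ipC hip k u); ring.
Qed.

(* First variation of the energy along k at the limit p. *)
Let minimizing_limit_Re_ge u p k :
  minimizing u -> hcvg ip u p -> K k -> psi k <= Re (ip k p).
Proof.
move=> hu hp Kk; rewrite -subr_ge0.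
apply: (@ge0_of_quadratic _ _ (Re (ip k k))) => t t0.
apply: (ge0_of_hcvg_Re hip (s := 2 * t) (k := k) hp).
  by rewrite mulr_ge0 // ltW.
move=> n; have [Kun En] := hu n.
have := inf_le_energy (subspaceZD hK t%:C Kk Kun).
rewrite energy_shift // Re_ipDr // Re_ipNr //.
by move: En; move: (n.+1%:R^-1) => eps; lra.
Qed.

Lemma Re_riesz_closure : exists p (u : nat -> V),
  [/\ forall n, K (u n), hcvg ip u p & forall k, K k -> Re (ip k p) = psi k].
Proof.
have [u hu] := exists_minimizing.
have [p hp] := hH.2 u (minimizing_cauchy hu).
exists p, u; split => [n|//|k Kk]; first by case: (hu n).
apply/eqP; rewrite eq_le (minimizing_limit_Re_ge hu hp Kk) andbT.
have := minimizing_limit_Re_ge hu hp (subspaceN hK Kk).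
by rewrite Re_ipNl // psiN //; lra.
Qed.

End RealRiesz.

Definition op_range (R : realType) (V W : lmodType R[i]) (D : V -> Prop)
  (T : V -> W) : W -> Prop := fun y => exists2 x, D x & T x = y.

Lemma op_range_inverse (R : realType) (V W : lmodType R[i]) (D : V -> Prop)
  (T : V -> W) : exists g : W -> V,
  forall y, op_range D T y -> D (g y) /\ T (g y) = y.
Proof.
suff /choice[g hg] : forall y, exists x, op_range D T y -> D x /\ T x = y.
  by exists g.
move=> y; have [[x Dx Tx]|nran] := pselect (op_range D T y).
  by exists x.
by exists 0 => /nran.
Qed.

Lemma closed_op_in_of_closed (R : realType) (V W : lmodType R[i])
  (ipV : V -> V -> R[i]) (ipW : W -> W -> R[i]) (S D : V -> Prop) (T : V -> W) :
  closed_op ipV ipW D T -> closed_op_in ipV ipW S D T.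
Proof. by move=> hT u x y hu _; apply: hT => // n; split => //; case: (hu n). Qed.

Section LinearOp.
Variables (R : realType) (V W : lmodType R[i]) (D : V -> Prop) (T : V -> W).
Hypothesis hT : is_linear_op D T.

Lemma linop_subspace : is_subspace D.
Proof. by case: hT. Qed.

Lemma linopZD a x y : D x -> D y -> T (a *: x + y) = a *: T x + T y.
Proof. by case: hT => _; apply. Qed.

Lemma linop0 : T 0 = 0.
Proof.
have D0 := subspace0 linop_subspace.
have := linopZD 1 D0 D0; rewrite !scale1r addr0 => H.
by apply: (addrI (T 0)); rewrite addr0 -H.
Qed.

Lemma linopZ a x : D x -> T (a *: x) = a *: T x.
Proof.
move=> Dx; have D0 := subspace0 linop_subspace.
by have := linopZD a Dx D0; rewrite !addr0 linop0 addr0.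
Qed.

Lemma linopB x y : D x -> D y -> T (x - y) = T x - T y.
Proof.
move=> Dx Dy; have := linopZD (-1) Dy Dx.
by rewrite !scaleN1r addrC => ->; rewrite addrC.
Qed.

Lemma op_range_subspace : is_subspace (op_range D T).
Proof.
split; first by exists 0; [exact: subspace0 linop_subspace | exact: linop0].
move=> a _ _ [x Dx <-] [y Dy <-]; exists (a *: x + y); last exact: linopZD.
exact: subspaceZD linop_subspace _ _ _ Dx Dy.
Qed.

End LinearOp.

(* Im <T x, y> = - Re <T (i x), y>, so real parts determine <T x, y>. *)
Lemma adjoint_graph_of_Re (R : realType) (V W : lmodType R[i])
  (ipV : V -> V -> R[i]) (ipW : W -> W -> R[i]) (D : V -> Prop) (T : V -> W)
  (y : W) (z : V) :
  is_inner_product ipV -> is_inner_product ipW -> is_linear_op D T ->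
  (forall x, D x -> Re (ipW (T x) y) = Re (ipV x z)) ->
  adjoint_graph ipV ipW D T y z.
Proof.
move=> hV hW hT hRe x Dx; apply: complex_eq; first exact: hRe.
have := hRe _ (subspaceZ (linop_subspace hT) 'i Dx).
by rewrite (linopZ hT) // !ipZl // !Re_iM => /oppr_inj.
Qed.

Section BoundedBelow.
Variables (R : realType) (X Y : lmodType R[i]).
Variables (ipX : X -> X -> R[i]) (ipY : Y -> Y -> R[i]).
Hypotheses (hX : is_hilbert ipX) (hY : is_hilbert ipY).
Variables (D : X -> Prop) (A : X -> Y).
Hypotheses (linA : is_linear_op D A) (closedA : closed_op ipX ipY D A).
Variable c : R.
Hypothesis c0 : 0 < c.
Hypothesis hA : forall x, D x -> c * hnorm ipX x <= hnorm ipY (A x).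

Lemma bounded_below_inj x x' : D x -> D x' -> A x = A x' -> x = x'.
Proof.
move=> Dx Dx' eqA; apply/eqP; rewrite -subr_eq0; apply/eqP/(hnorm_eq0 hX.1).
have := hA (subspaceB (linop_subspace linA) Dx Dx').
rewrite (linopB linA) // eqA subrr (hnorm0 hY.1) => H.
by apply/eqP; rewrite eq_le hnorm_ge0 andbT -(pmulr_rle0 _ c0).
Qed.

Lemma op_range_closed u y :
  (forall n, op_range D A (u n)) -> hcvg ipY u y -> op_range D A y.
Proof.
move=> hu hy.
have /choice[xs hxs] : forall n, exists x, D x /\ A x = u n.
  by move=> n; case: (hu n) => x Dx Ax; exists x.
have xs_cauchy : hcauchy ipX xs.
  move=> e e0; have [N HN] := hcvg_cauchy hY.1 hy (mulr_gt0 e0 c0).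
  exists N => i j Hi Hj; have [Di Ai] := hxs i; have [Dj Aj] := hxs j.
  have := hA (subspaceB (linop_subspace linA) Di Dj).
  rewrite (linopB linA) // Ai Aj -(ltr_pM2l c0) [c * e]mulrC => H.
  exact: le_lt_trans H (HN i j Hi Hj).
have [x hx] := hX.2 xs xs_cauchy.
have hAx : hcvg ipY (fun n => A (xs n)) y.
  by move=> e /hy[N HN]; exists N => n /HN; rewrite (hxs n).2.
have [Dx <-] := closedA (fun n => conj (hxs n).1 I) I hx hAx.
by exists x.
Qed.

Lemma adjoint_range_onto f :
  exists2 z, op_range D A z & adjoint_graph ipX ipY D A z f.
Proof.
have hran := op_range_subspace linA.
have [g hg] := op_range_inverse D A.
have g_linear a y y' : op_range D A y -> op_range D A y' ->
    g (a *: y + y') = a *: g y + g y'.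
  move=> Hy Hy'; have [Dgy Agy] := hg _ Hy; have [Dgy' Agy'] := hg _ Hy'.
  have [Dg Ag] := hg _ (subspaceZD hran a Hy Hy').
  apply: bounded_below_inj => //.
    exact: subspaceZD (linop_subspace linA) _ _ _ Dgy Dgy'.
  by rewrite Ag (linopZD linA) // Agy Agy'.
pose psi y := Re (ipX (g y) f).
have psi_linear a y y' : op_range D A y -> op_range D A y' ->
    psi (a%:C *: y + y') = a * psi y + psi y'.
  by move=> Hy Hy'; rewrite /psi g_linear // (ipDl hX.1) raddfD /= (Re_ipZl hX.1).
have psi_bounded y : op_range D A y -> psi y <= hnorm ipX f / c * hnorm ipY y.
  move=> Hy; have [Dgy Agy] := hg _ Hy.
  apply: le_trans (Re_ip_le_hnorm hX.1 (g y) f) _; rewrite mulrC.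
  have := ler_wpM2l (divr_ge0 (hnorm_ge0 ipX f) (ltW c0)) (hA Dgy).
  by rewrite Agy mulrA divfK ?gt_eqF.
have [p [u [hu hp hpsi]]] := Re_riesz_closure hY hran psi_linear psi_bounded.
exists p; first exact: op_range_closed hu hp.
apply: adjoint_graph_of_Re hX.1 hY.1 linA _ => x Dx.
have ran_Ax : op_range D A (A x) by exists x.
have [Dg Ag] := hg _ ran_Ax.
by rewrite hpsi // /psi (bounded_below_inj Dg Dx Ag).
Qed.

Variable DB : Y -> Prop.
Hypothesis hDB : is_subspace DB.
Hypothesis adjoint_domB : forall y z, adjoint_graph ipX ipY D A y z -> DB y.

Lemma op_range_dom_dense : dense_in ipY (op_range D A) DB.
Proof.
move=> _ [x0 Dx0 <-] e e0.
pose K y := op_range D A y /\ DB y.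
have hK : is_subspace K.
  have hran := op_range_subspace linA.
  split; first by split; [exact: subspace0 hran | exact: subspace0 hDB].
  move=> a y y' [Ry DBy] [Ry' DBy'].
  split; first exact: subspaceZD hran _ _ _ Ry Ry'.
  exact: subspaceZD hDB _ _ _ DBy DBy'.
pose psi y := Re (ipY y (A x0)).
have psi_linear a y y' : K y -> K y' -> psi (a%:C *: y + y') = a * psi y + psi y'.
  by move=> _ _; rewrite /psi (ipDl hY.1) raddfD /= (Re_ipZl hY.1).
have psi_bounded k : K k -> psi k <= hnorm ipY (A x0) * hnorm ipY k.
  by move=> _; rewrite mulrC; exact: Re_ip_le_hnorm hY.1 k (A x0).
have [p [u [hu hp hpsi]]] := Re_riesz_closure hY hK psi_linear psi_bounded.
have [xp Dxp Axp] := op_range_closed (fun n => (hu n).1) hp.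
have [z ran_z Az] := adjoint_range_onto (x0 - xp).
have Kz : K z by split => //; exact: adjoint_domB Az.
have x0_eq : x0 = xp.
  apply/eqP; rewrite -subr_eq0; apply/eqP/(Re_ip_eq0 hX.1).
  rewrite -(Az _ (subspaceB (linop_subspace linA) Dx0 Dxp)) (linopB linA) // Axp.
  by rewrite (Re_ipBl hY.1) !(Re_ipC hY.1 z) (hpsi z Kz) subrr.
have [N HN] := hp e e0.
exists (u N); split; [exact: (hu N).2 | exact: (hu N).1 |].
by rewrite x0_eq Axp (hnormBC hY.1); exact: HN.
Qed.

End BoundedBelow.

Theorem lemma3p1 (R : realType) (X Y : lmodType R[i])
  (ipX : X -> X -> R[i]) (ipY : Y -> Y -> R[i])
  (hX : is_hilbert ipX) (hY : is_hilbert ipY)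
  (DA : X -> Prop) (A : X -> Y)
  (linA : is_linear_op DA A) (closedA : closed_op ipX ipY DA A)
  (denseA : densely_defined ipX DA)
  (posA : exists c : R, 0 < c /\
     forall x : X, DA x -> c * hnorm ipX x <= hnorm ipY (A x))
  (DB : Y -> Prop) (B : Y -> X)
  (linB : is_linear_op DB B) (closedB : closed_op ipY ipX DB B)
  (denseB : densely_defined ipY DB)
  (AstarB : forall (y : Y) (z : X), adjoint_graph ipX ipY DA A y z ->
     DB y /\ B y = - z) :
  let Y1 : Y -> Prop := fun y => exists2 x, DA x & A x = y in
  closed_op_in ipY ipX Y1 DB B /\ dense_in ipY Y1 DB.
Proof.
move=> Y1; have [c [c0 hA]] := posA; split; first exact: closed_op_in_of_closed.
apply: (op_range_dom_dense hX hY linA closedA c0 hA (linop_subspace linB)).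
by move=> y z /AstarB[].
Qed.
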